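(* Let $p$ be a prime and $r,s$ integers with $1\le s\le p-1$. Every proper $(r,s)$-GAP in $\mathbb{F}_p^n$ can be written as a union of independent $(k,s)$-GAPs in $\mathbb{F}_p^n$ for some integer $k\ge r\log s/\log p$.
   Context: For $a_1,\dots,a_r,b\in\mathbb{F}_p^n$, the $(r,s)$-GAP $G_{a_1,\dots,a_r,b}$ is $\{\sum_{i=1}^r a_it_i+b: t_i\in\mathbb{Z},\ 0\le t_i\le s-1\}$; it is proper if all $s^r$ sums are distinct, and independent if $a_1,\dots,a_r$ are linearly independent over $\mathbb{F}_p$. *)

From Stdlib Require Import Reals.
From HB Require Import structures.
From mathcomp Require Import all_boot all_order all_algebra.
Set Implicit Arguments. Unset Strict Implicit. Unset Printing Implicit Defensive.
Import GRing.Theory.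
Local Open Scope ring_scope.

(* The coefficient vector t = (t_1,...,t_r) with 0 <= t_i <= s-1 is a
   finite function 'I_r -> 'I_s; t_i acts on a_i as the integer multiple. *)
Definition gap_elt (p n r s : nat) (a : 'I_r -> 'rV['F_p]_n) (b : 'rV['F_p]_n)
  (t : {ffun 'I_r -> 'I_s}) : 'rV['F_p]_n :=
  \sum_(i < r) a i *+ t i + b.

Definition GAP (p n r : nat) (s : nat) (a : 'I_r -> 'rV['F_p]_n) (b : 'rV['F_p]_n)
  : {set 'rV['F_p]_n} :=
  [set @gap_elt p n r s a b t | t : {ffun 'I_r -> 'I_s}].

Definition proper_GAP (p n r s : nat) (a : 'I_r -> 'rV['F_p]_n) (b : 'rV['F_p]_n) : Prop :=
  injective (@gap_elt p n r s a b).

Definition lin_indep (p n r : nat) (a : 'I_r -> 'rV['F_p]_n) : Prop :=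
  forall c : 'I_r -> 'F_p, \sum_(i < r) c i *: a i = 0 -> forall i, c i = 0.
Arguments GAP {p n r} s a b.
Arguments proper_GAP {p n r} s a b.

(* Take a maximal linearly independent subfamily (a_{f l})_l of the a_i,
   of size k = rank (a_i).  Splitting each sum over the indices in and out of
   the image of f exhibits the GAP as a union of translates of the independent
   (k,s)-GAP generated by the a_{f l}.  Every element of the GAP lies in
   b + span (a_i), which has p^k elements, so properness gives s^r <= p^k. *)

From Stdlib Require Import Reals Lra.
From HB Require Import structures.
From mathcomp Require Import all_boot all_order all_algebra.
Import GRing.Theory.

Section Subfamily.
Local Open Scope ring_scope.
Context {p n r s k : nat} (a : 'I_r -> 'rV['F_p]_n) (b : 'rV['F_p]_n).
Context (f : 'I_k -> 'I_r).
Hypothesis f_inj : injective f.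

Definition off_subfamily_sum (t : {ffun 'I_r -> 'I_s}) : 'rV['F_p]_n :=
  \sum_(i | i \notin f @: 'I_k) a i *+ t i.

Lemma gap_elt_subfamily (t : {ffun 'I_r -> 'I_s}) :
  gap_elt a b t = gap_elt (a \o f) (b + off_subfamily_sum t) [ffun l => t (f l)].
Proof.
rewrite /gap_elt /off_subfamily_sum (bigID (mem (f @: 'I_k))) /=.
rewrite big_imset /=; last by move=> x y _ _ /f_inj.
under [in RHS]eq_bigr do rewrite ffunE.
by rewrite -addrA [b + _]addrC.
Qed.

Lemma GAP_subfamily_bigcup :
  GAP s a b = \bigcup_(t : {ffun 'I_r -> 'I_s}) GAP s (a \o f) (b + off_subfamily_sum t).
Proof.
apply/setP => x; apply/imsetP/bigcupP => [[t _ ->] | [t _ /imsetP [u _ ->]]].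
  by exists t => //; rewrite gap_elt_subfamily; apply: imset_f.
pose t' := [ffun i => if [pick l | f l == i] is Some l then u l else t i].
have t'_f l : t' (f l) = u l.
  by rewrite ffunE; case: pickP => [l' /eqP /f_inj -> // | /(_ l)]; rewrite eqxx.
have t'_off i : i \notin f @: 'I_k -> t' i = t i.
  move=> hi; rewrite ffunE; case: pickP => [l /eqP hl | //].
  by rewrite -hl imset_f in hi.
exists t' => //; rewrite gap_elt_subfamily; congr (gap_elt _ (b + _) _).
  by apply: eq_bigr => i /t'_off ->.
by apply/ffunP => l; rewrite ffunE t'_f.
Qed.

End Subfamily.

Section RowSpace.
Local Open Scope ring_scope.
Context {p n r s : nat} (a : 'I_r -> 'rV['F_p]_n) (b : 'rV['F_p]_n).

Let M := \matrix_(i < r) a i.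

Lemma gap_elt_mulmx (t : {ffun 'I_r -> 'I_s}) :
  gap_elt a b t = \row_i (t i : nat)%:R *m M + b.
Proof.
rewrite /gap_elt mulmx_sum_row; congr (_ + _).
by apply: eq_bigr => i _; rewrite !mxE rowK scaler_nat.
Qed.

Lemma lin_indep_maxrankfun : lin_indep (a \o maxrankfun M).
Proof.
move=> c hc j.
have : \row_l c l *m rowsub (maxrankfun M) M = 0 *m rowsub (maxrankfun M) M.
  rewrite mul0mx mulmx_sum_row -[RHS]hc; apply: eq_bigr => l _.
  by rewrite mxE row_rowsub rowK.
by move/(row_free_inj (maxrowsub_free M))/matrixP/(_ ord0 j); rewrite !mxE.
Qed.

Lemma card_GAP_le_rank : prime p -> (#|GAP s a b| <= p ^ \rank M)%N.
Proof.
move=> p_pr; have M_sub : (M <= rowsub (maxrankfun M) M)%MS by rewrite eq_maxrowsub.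
have [D defM] := submxP M_sub.
pose span_b (c : 'rV['F_p]_(\rank M)) := c *m rowsub (maxrankfun M) M + b.
have GAP_sub : GAP s a b \subset span_b @: [set: 'rV_(\rank M)].
  apply/subsetP => _ /imsetP [t _ ->]; rewrite gap_elt_mulmx {1}defM mulmxA.
  exact: imset_f.
rewrite (leq_trans (subset_leq_card GAP_sub)) // (leq_trans (leq_imset_card _ _)) //.
by rewrite cardsT card_mx card_Fp // mul1n.
Qed.

End RowSpace.

Lemma card_proper_GAP {p n r s : nat} {a : 'I_r -> 'rV['F_p]_n} {b : 'rV['F_p]_n} :
  proper_GAP s a b -> #|GAP s a b| = (s ^ r)%N.
Proof. by move=> a_pr; rewrite card_imset // card_ffun !card_ord. Qed.

Lemma INR_expn (m e : nat) : INR (m ^ e) = pow (INR m) e.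
Proof. by elim: e => [|e IH] //=; rewrite expnS mult_INR IH. Qed.

Lemma ln_ratio_le_of_expn_le (p r s k : nat) :
  (1 < p)%N -> (0 < s)%N -> (s ^ r <= p ^ k)%N ->
  Rge (INR k) (Rdiv (Rmult (INR r) (ln (INR s))) (ln (INR p))).
Proof.
move=> p_gt1 s_gt0 le_sr_pk.
have s_pos : Rlt 0 (INR s) by apply: lt_0_INR; apply/ltP.
have p_gt1R : Rlt 1 (INR p) by apply: lt_1_INR; apply/ltP.
have lnp_pos : Rlt 0 (ln (INR p)) by rewrite -ln_1; apply: ln_increasing; lra.
have le_ln : Rle (ln (pow (INR s) r)) (ln (pow (INR p) k)).
  have : Rle (pow (INR s) r) (pow (INR p) k).
    by rewrite -!INR_expn; apply: le_INR; apply/leP.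
  case/Rle_lt_or_eq_dec => [lt_pow | ->]; last exact: Rle_refl.
  by apply/Rlt_le/ln_increasing => //; apply: pow_lt.
rewrite !ln_pow in le_ln; try lra.
apply: Rle_ge; apply: (Rmult_le_reg_r (ln (INR p))) => //.
rewrite /Rdiv Rmult_assoc Rinv_l; lra.
Qed.

Theorem claim5p7 (p r s : nat) (hp : prime p) (hs1 : (1 <= s)%N) (hs2 : (s <= p - 1)%N)
  (n : nat) (a : 'I_r -> 'rV['F_p]_n) (b : 'rV['F_p]_n) :
  proper_GAP s a b ->
  exists k : nat,
    Rge (INR k) (Rdiv (Rmult (INR r) (ln (INR s))) (ln (INR p))) /\
    exists (m : nat) (A : 'I_m -> 'I_k -> 'rV['F_p]_n) (B : 'I_m -> 'rV['F_p]_n),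
      (forall j, lin_indep (A j)) /\
      GAP s a b = \bigcup_(j < m) GAP s (A j) (B j).
Proof.
move=> a_pr; pose M := (\matrix_(i < r) a i)%R; pose f := maxrankfun M.
exists (\rank M); split.
  apply: ln_ratio_le_of_expn_le => //; first exact: prime_gt1.
  by rewrite -(card_proper_GAP a_pr) card_GAP_le_rank.
pose T := {ffun 'I_r -> 'I_s}.
exists #|T|, (fun _ => a \o f), (fun j => b + off_subfamily_sum a f (enum_val j))%R.
split; first by move=> _; apply: lin_indep_maxrankfun.
rewrite (GAP_subfamily_bigcup a b f (@maxrankfun_inj _ _ _ M)).
apply/setP => x; apply/bigcupP/bigcupP => [[t _] | [j _]]; last by exists (enum_val j).
by exists (enum_rank t); rewrite ?enum_rankK.
Qed.
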